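(* Under the setting in the context, for any $u\in\mathbb{R}^d$ and every $S\ge2$, $$KA_S(\bar f(\tilde y_S)-\bar f(u))\le\frac K2\|x_0-u\|^2-\frac{K(1+A_S\gamma)}{2}\|v_{S,K}-u\|^2-\frac K4\|v_{1,1}-v_{1,0}\|^2+\sum_{s=2}^S\sum_{k=1}^K E_{s,k}(u),$$ where $$E_{s,k}(u)=A_s(f(y_{s,k})-f(x_{s,k}))-A_{s-1}(f(\tilde y_{s-1})-f(x_{s,k}))+a_s\langle\nabla f(x_{s,k})-q_{s,k},x_{s,k}-u\rangle+a_s\langle q_{s,k},x_{s,k}-v_{s,k}\rangle-\frac{K(1+A_{s-1}\gamma)}{2}\|v_{s,k}-v_{s,k-1}\|^2.$$
   Context: Problem $\min_x\bar f(x)=f(x)+g(x)$, where $f:\mathbb{R}^d\to\mathbb{R}$ is convex, continuously differentiable and satisfies $f(y)\le f(x)+\langle\nabla f(x),y-x\rangle+\frac L2\|y-x\|^2$ for all $x,y$ (for a given $L>0$), and $g$ is proper, lower semicontinuous and $\gamma$-strongly convex ($\gamma\ge0$). Fix an integer $K\ge1$ and $x_0\in\mathrm{dom}(g)$. Let $a_0=A_0=0$, $a_1=A_1$ with $0<a_1\le\frac1{4L}$, and $a_s>0$ for $s\ge2$, $A_s=A_{s-1}+a_s$. Let $x_{1,1}=v_{1,0}=x_0$. Let $x_{s,k}\in\mathbb{R}^d$ ($s\ge2$, $k\in[K]$) and $q_{s,k}\in\mathbb{R}^d$ be arbitrary. Define $\psi_{1,0}(u)=\frac K2\|u-x_0\|^2$,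 $\psi_{1,1}(u)=\psi_{1,0}(u)+Ka_1(f(x_0)+\langle\nabla f(x_0),u-x_0\rangle+g(u))$, $\psi_{2,0}=\psi_{1,1}$, and for $s\ge2$, $1\le k\le K$: $\psi_{s,k}(u)=\psi_{s,k-1}(u)+a_s(f(x_{s,k})+\langle q_{s,k},u-x_{s,k}\rangle+g(u))$, with $\psi_{s+1,0}=\psi_{s,K}$. Let $v_{s,k}=\arg\min_u\psi_{s,k}(u)$ (so $v_{s+1,0}=v_{s,K}$). Let $\tilde y_1=v_{1,1}$, and for $s\ge2$: $y_{s,k}=\frac{A_{s-1}}{A_s}\tilde y_{s-1}+\frac{a_s}{A_s}v_{s,k}$ for $k\in[K]$ and $\tilde y_s=\frac1K\sum_{k=1}^Ky_{s,k}$. *)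

From HB Require Import structures.
From mathcomp Require Import all_boot all_order all_algebra.
From mathcomp Require Import all_classical all_reals all_analysis.
Set Implicit Arguments. Unset Strict Implicit. Unset Printing Implicit Defensive.
Import Order.TTheory GRing.Theory Num.Theory.
Import numFieldNormedType.Exports.
Local Open Scope ring_scope.

Section Defs.
Variables (R : realType) (d : nat).
Notation vec := 'rV[R]_d.

Definition dotp (u v : vec) : R := \sum_(i < d) u 0 i * v 0 i.
Definition sqn (u : vec) : R := dotp u u.

Variables (f : vec -> R) (gradf : vec -> vec) (g : vec -> \bar R)
  (K : nat) (x0 : vec) (a : nat -> R) (x q v : nat -> nat -> vec).

Definition Aseq (s : nat) : R := \sum_(i < s.+1) a i.

Definition lin (s k : nat) (u : vec) : R := f (x s k) + dotp (q s k) (u - x s k).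

Definition psi10 (u : vec) : \bar R := ((K%:R / 2) * sqn (u - x0))%:E.
Definition psi11 (u : vec) : \bar R :=
  psi10 u + (K%:R * a 1)%:E * ((f x0 + dotp (gradf x0) (u - x0))%:E + g u).

Definition stage (s k : nat) (u : vec) : \bar R :=
  (\sum_(i < k) (a s)%:E * ((lin s i.+1 u)%:E + g u))%E.

(* psi0 s = psi_{s,0} for s >= 2 (psi_{2,0} = psi_{1,1}, psi_{s+1,0} = psi_{s,K}) *)
Fixpoint psi0 (s : nat) : vec -> \bar R :=
  match s with
  | 0 | 1 | 2 => psi11
  | s'.+1 => fun u => psi0 s' u + stage s' K u
  end.

(* psi s k = psi_{s,k}, for s = 1, k in {0,1}, and s >= 2, k in {0..K} *)
Definition psi (s k : nat) (u : vec) : \bar R :=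
  match s with
  | 0 => psi10 u
  | 1 => if k == 0%N then psi10 u else psi11 u
  | _ => psi0 s u + stage s k u
  end.

Fixpoint ytilde (s : nat) : vec :=
  match s with
  | 0 => v 1 1
  | s'.+1 =>
    match s' with
    | 0 => v 1 1
    | _ => (K%:R)^-1 *: \sum_(k < K)
             ((Aseq s' / Aseq s) *: ytilde s' + (a s / Aseq s) *: v s k.+1)
    end
  end.

Definition yy (s k : nat) : vec :=
  (Aseq s.-1 / Aseq s) *: ytilde s.-1 + (a s / Aseq s) *: v s k.

Definition Err (gamma : R) (s k : nat) (u : vec) : R :=
  Aseq s * (f (yy s k) - f (x s k))
  - Aseq s.-1 * (f (ytilde s.-1) - f (x s k))
  + a s * dotp (gradf (x s k) - q s k) (x s k - u)
  + a s * dotp (q s k) (x s k - v s k)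
  - (K%:R * (1 + Aseq s.-1 * gamma) / 2) * sqn (v s k - v s k.-1).

End Defs.

From HB Require Import structures.
From mathcomp Require Import all_boot all_order all_algebra.
From mathcomp Require Import all_classical all_reals all_analysis.
From mathcomp Require Import ring lra.
Import Order.TTheory GRing.Theory Num.Theory.
Import numFieldNormedType.Exports.
Local Open Scope ring_scope.

(* The models psi_{s,k} of the method are finite exactly on dom g, where they
   are K(1 + A_{s-1} gamma)-strongly convex (quadratic term plus a_s-weighted
   linear models of f plus g).  Hence each minimizer v_{s,k} satisfies the
   quadratic-growth inequality psi(u) >= psi(v) + m/2 |u - v|^2.
   - Lower bound: by induction on the stages, using quadratic growth between
     consecutive minimizers, convexity of g along y_{s,k} and Jensen's
     inequality for tilde y_s = (1/K) sum_k y_{s,k}, we get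
       K A_S fbar(tilde y_S) + K/4 |v_{1,1} - v_{1,0}|^2 - sum E^opt
         <= psi_{S,K}(v_{S,K}),
     where E^opt is the part of E_{s,k} not depending on u; the first stage
     is a proximal gradient step with a_1 <= 1/(4L).
   - Upper bound: the linear models lie below f up to the gradient-estimation
     error, so psi_{S,K}(u) <= K/2 |u - x_0|^2 + K A_S fbar(u) + sum of errors.
   Quadratic growth of psi_{S,K} at v_{S,K} links the two bounds. *)

Section Euclid.
Local Set Implicit Arguments. Local Unset Strict Implicit.
Variables (R : realType) (d : nat).
Implicit Types (u w y z : 'rV[R]_d) (c t : R).

Lemma dotpDl u w z : dotp (u + w) z = dotp u z + dotp w z.
Proof. by rewrite /dotp -big_split; apply: eq_bigr => i _; rewrite !mxE mulrDl. Qed.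

Lemma dotpDr u w z : dotp z (u + w) = dotp z u + dotp z w.
Proof. by rewrite /dotp -big_split; apply: eq_bigr => i _; rewrite !mxE mulrDr. Qed.

Lemma dotpZl c u z : dotp (c *: u) z = c * dotp u z.
Proof. by rewrite /dotp mulr_sumr; apply: eq_bigr => i _; rewrite !mxE mulrA. Qed.

Lemma dotpZr c u z : dotp z (c *: u) = c * dotp z u.
Proof. by rewrite /dotp mulr_sumr; apply: eq_bigr => i _; rewrite !mxE; ring. Qed.

Lemma dotpNl u z : dotp (- u) z = - dotp u z.
Proof. by rewrite -scaleN1r dotpZl mulN1r. Qed.

Lemma dotpNr u z : dotp z (- u) = - dotp z u.
Proof. by rewrite -scaleN1r dotpZr mulN1r. Qed.

Lemma dotpC u z : dotp u z = dotp z u.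
Proof. by rewrite /dotp; apply: eq_bigr => i _; rewrite mulrC. Qed.

Lemma dotp_subC w y z : dotp w (y - z) = - dotp w (z - y).
Proof. by rewrite !(dotpDr, dotpNr); ring. Qed.

Lemma sqn_ge0 u : 0 <= sqn u.
Proof. by rewrite /sqn /dotp; apply: sumr_ge0 => i _; rewrite -expr2 sqr_ge0. Qed.

Lemma sqnZ c y : sqn (c *: y) = c ^+ 2 * sqn y.
Proof. by rewrite /sqn dotpZl dotpZr; ring. Qed.

Lemma sqn_subC y z : sqn (y - z) = sqn (z - y).
Proof. by rewrite /sqn !(dotpDl, dotpDr, dotpNl, dotpNr) (dotpC z y); ring. Qed.

Lemma sqn_comb t y z :
  sqn (t *: y + (1 - t) *: z) =
  t * sqn y + (1 - t) * sqn z - t * (1 - t) * sqn (y - z).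
Proof.
by rewrite /sqn !(dotpDl, dotpDr, dotpNl, dotpNr, dotpZl, dotpZr) (dotpC z y); ring.
Qed.

Lemma comb_subr t y z p :
  t *: y + (1 - t) *: z - p = t *: (y - p) + (1 - t) *: (z - p).
Proof. by apply/rowP => i; rewrite !mxE; ring. Qed.

End Euclid.

Lemma le_of_le_add_scaled (R : realType) (X Y Z : R) :
  (forall t, 0 < t < 1 -> X <= Y + t * Z) -> X <= Y.
Proof.
move=> hXY; have [Zle0|Zgt0] := lerP Z 0.
  have half01 : 0 < (2:R)^-1 < 1 by apply/andP; split; lra.
  by have := hXY _ half01; lra.
apply/ler_addgt0Pr => e e0.
have eZ : 0 < e + Z by lra.
have t0 : 0 < e / (e + Z) by rewrite divr_gt0.
have t1 : e / (e + Z) < 1 by rewrite ltr_pdivrMr // mul1r; lra.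
have := hXY _ (andb_true_intro (conj t0 t1)).
have : e / (e + Z) * Z <= e by rewrite mulrAC ler_pdivrMr //; nra.
lra.
Qed.

Section StrongConvexity.
Local Set Implicit Arguments. Local Unset Strict Implicit.
Variables (R : realType) (d : nat) (D : pred 'rV[R]_d).
Local Notation vec := 'rV[R]_d.
Implicit Types (F : vec -> R) (m c t : R) (w p y z : vec).

Definition sconvex_on m F := forall y z t, D y -> D z -> 0 < t < 1 ->
  F (t *: y + (1 - t) *: z) <=
  t * F y + (1 - t) * F z - m / 2 * t * (1 - t) * sqn (y - z).

Hypothesis convexD : forall y z t, D y -> D z -> 0 < t < 1 ->
  D (t *: y + (1 - t) *: z).

Lemma sconvex_on_eq m F F' : {in D, F =1 F'} -> sconvex_on m F' -> sconvex_on m F.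
Proof. by move=> eFF' hF y z t Dy Dz t01; rewrite !eFF' //; [apply: hF | apply: convexD]. Qed.

Lemma sconvex_term_ge0 m t y : 0 <= m -> 0 < t < 1 -> 0 <= m / 2 * t * (1 - t) * sqn y.
Proof.
move=> m0 /andP[t0 t1]; apply: mulr_ge0; last exact: sqn_ge0.
by apply: mulr_ge0; [apply: mulr_ge0|]; lra.
Qed.

Lemma sconvex_on_weaken m m' F : m' <= m -> sconvex_on m F -> sconvex_on m' F.
Proof.
move=> mm' hF y z t Dy Dz t01; have := hF y z t Dy Dz t01.
have := @sconvex_term_ge0 (m - m') t (y - z) ltac:(lra) t01.
suff -> : (m - m') / 2 * t * (1 - t) * sqn (y - z) =
   m / 2 * t * (1 - t) * sqn (y - z) - m' / 2 * t * (1 - t) * sqn (y - z) by lra.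
by ring.
Qed.

Lemma sconvex_onD m1 m2 F1 F2 : sconvex_on m1 F1 -> sconvex_on m2 F2 ->
  sconvex_on (m1 + m2) (fun u => F1 u + F2 u).
Proof.
move=> h1 h2 y z t Dy Dz t01.
have := h1 y z t Dy Dz t01; have := h2 y z t Dy Dz t01.
suff -> : (m1 + m2) / 2 * t * (1 - t) * sqn (y - z) =
   m1 / 2 * t * (1 - t) * sqn (y - z) + m2 / 2 * t * (1 - t) * sqn (y - z) by lra.
by ring.
Qed.

Lemma sconvex_onZ c m F : 0 <= c -> sconvex_on m F -> sconvex_on (c * m) (fun u => c * F u).
Proof.
move=> c0 hF y z t Dy Dz t01; apply: (le_trans (ler_wpM2l c0 (hF y z t Dy Dz t01))).
by rewrite le_eqVlt; apply/orP; left; apply/eqP; ring.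
Qed.

Lemma sconvex_on_sum n (m : nat -> R) (F : nat -> vec -> R) :
  (forall i, sconvex_on (m i) (F i)) ->
  sconvex_on (\sum_(i < n) m i) (fun u => \sum_(i < n) F i u).
Proof.
move=> hF; elim: n => [|n IH] y z t Dy Dz t01.
  by rewrite !big_ord0; lra.
have := sconvex_onD IH (hF n) Dy Dz t01.
by rewrite !big_ord_recr.
Qed.

Lemma sconvex_on_affine c w p : sconvex_on 0 (fun u => c + dotp w (u - p)).
Proof.
move=> y z t _ _ _ /=; rewrite comb_subr !(dotpDr, dotpZr, dotpNr).
by rewrite le_eqVlt; apply/orP; left; apply/eqP; ring.
Qed.

Lemma sconvex_on_sqn c p : sconvex_on c (fun u => c / 2 * sqn (u - p)).
Proof.
move=> y z t _ _ _ /=; rewrite comb_subr sqn_comb.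
have -> : y - p - (z - p) = y - z by apply/rowP => i; rewrite !mxE; ring.
by rewrite le_eqVlt; apply/orP; left; apply/eqP; ring.
Qed.

Lemma sconvex_min_growth m F w u : sconvex_on m F -> D w ->
  (forall z, D z -> F w <= F z) -> D u -> F w + m / 2 * sqn (u - w) <= F u.
Proof.
move=> hF Dw wmin Du.
apply: (@le_of_le_add_scaled _ _ _ (m / 2 * sqn (u - w))) => t t01.
have /andP[t0 t1] := t01.
have hmin := wmin _ (convexD Du Dw t01).
have hcomb := hF u w t Du Dw t01.
rewrite -(ler_pM2l t0).
suff : t * (F u + t * (m / 2 * sqn (u - w))) - t * (F w + m / 2 * sqn (u - w)) =
  (t * F u + (1 - t) * F w - m / 2 * t * (1 - t) * sqn (u - w)) - F w by lra.
by ring.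
Qed.

Lemma convex_on_comb F al be y z : sconvex_on 0 F -> 0 < al -> 0 < be ->
  D y -> D z ->
  D ((al / (al + be)) *: y + (be / (al + be)) *: z) /\
  (al + be) * F ((al / (al + be)) *: y + (be / (al + be)) *: z) <= al * F y + be * F z.
Proof.
move=> hF al0 be0 Dy Dz; have ab0 : 0 < al + be by lra.
have -> : be / (al + be) = 1 - al / (al + be) by field; exact: lt0r_neq0.
have t01 : 0 < al / (al + be) < 1.
  by apply/andP; split; [rewrite divr_gt0 | rewrite ltr_pdivrMr //]; lra.
split; first exact: convexD.
have := ler_wpM2l (ltW ab0) (hF y z _ Dy Dz t01).
suff -> : (al + be) * (al / (al + be) * F y + (1 - al / (al + be)) * F z -
    0 / 2 * (al / (al + be)) * (1 - al / (al + be)) * sqn (y - z)) =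
  al * F y + be * F z by [].
by field; exact: lt0r_neq0.
Qed.

Lemma jensen_on F n (p : nat -> vec) : sconvex_on 0 F ->
  (forall i, (i <= n)%N -> D (p i)) ->
  D (n.+1%:R^-1 *: \sum_(i < n.+1) p i) /\
  n.+1%:R * F (n.+1%:R^-1 *: \sum_(i < n.+1) p i) <= \sum_(i < n.+1) F (p i).
Proof.
move=> hF; elim: n => [|n IH] Dp.
  by rewrite !big_ord1 invr1 scale1r mul1r; split; [exact: Dp|].
have [Dbar hbar] := IH (fun i ni => Dp i (leqW ni)).
set N : R := n.+1%:R; have N0 : 0 < N by rewrite ltr0n.
have -> : n.+2%:R = N + 1 :> R by rewrite -natr1.
have -> : (N + 1)^-1 *: \sum_(i < n.+2) p i =
    (N / (N + 1)) *: (N^-1 *: \sum_(i < n.+1) p i) + (1 / (N + 1)) *: p n.+1.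
  rewrite big_ord_recr /= scalerDr scalerA; congr (_ *: _ + _ *: _).
    by field; apply/andP; split; apply: lt0r_neq0; lra.
  by rewrite div1r.
have [Dnew hnew] := convex_on_comb hF N0 ltr01 Dbar (Dp n.+1 (leqnn _)).
split => //; rewrite [X in _ <= X]big_ord_recr /=; move: hnew hbar; rewrite mul1r -/N; lra.
Qed.

End StrongConvexity.

Lemma convex_tangent_le {R : realType} {d : nat} {F : 'rV[R]_d -> R}
    {gradF : 'rV[R]_d -> 'rV[R]_d} {L : R} :
  (forall (y z : 'rV[R]_d) (t : R), 0 <= t <= 1 ->
     F (t *: y + (1 - t) *: z) <= t * F y + (1 - t) * F z) ->
  (forall y z : 'rV[R]_d, F z <= F y + dotp (gradF y) (z - y) + L / 2 * sqn (z - y)) ->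
  forall y u, F y + dotp (gradF y) (u - y) <= F u.
Proof.
move=> Fconv Fsmooth y u.
apply: (@le_of_le_add_scaled _ _ _ (L / 2 * sqn (u - y))) => t /andP[t0 t1].
(* y is a convex combination of u and the point w = y - t (u - y). *)
set w := y + (- t) *: (u - y).
have t1' : 0 < 1 + t by lra.
have tau : 0 <= (1 + t)^-1 <= 1.
  by apply/andP; split; [rewrite invr_ge0; lra | rewrite invf_le1 //; lra].
have hconv := Fconv w u _ tau.
rewrite (_ : (1 + t)^-1 *: w + (1 - (1 + t)^-1) *: u = y) in hconv; last first.
  by apply/rowP => i; rewrite /w !mxE; field; exact: lt0r_neq0.
have hw := Fsmooth y w.
rewrite (_ : w - y = (- t) *: (u - y)) ?dotpZr ?sqnZ ?sqrrN in hw; last first.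
  by rewrite /w addrAC subrr add0r.
have hyw : F y * (1 + t) <= F w + t * F u.
  suff <- : ((1 + t)^-1 * F w + (1 - (1 + t)^-1) * F u) * (1 + t) = F w + t * F u.
    by rewrite ler_pM2r.
  by field; exact: lt0r_neq0.
rewrite -(ler_pM2l t0); move: hw hyw; lra.
Qed.

Section AcceleratedBound.
Variables (R : realType) (d : nat)
  (f : 'rV[R]_d -> R) (gradf : 'rV[R]_d -> 'rV[R]_d) (g : 'rV[R]_d -> \bar R)
  (L gamma : R) (K : nat) (x0 : 'rV[R]_d) (a : nat -> R)
  (x q v : nat -> nat -> 'rV[R]_d).
Local Notation vec := 'rV[R]_d.
Local Notation A := (Aseq a).
Local Notation Psi := (psi f gradf g K x0 a x q).
Local Notation lmod := (lin f x q).
Local Notation ytl := (ytilde K a v).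
Local Notation yl := (yy K a v).
Implicit Types (u w y z : vec) (s k n : nat).

Hypothesis f_convex : forall y z (t : R), 0 <= t <= 1 ->
  f (t *: y + (1 - t) *: z) <= t * f y + (1 - t) * f z.
Hypothesis L_gt0 : 0 < L.
Hypothesis f_smooth : forall y z,
  f z <= f y + dotp (gradf y) (z - y) + L / 2 * sqn (z - y).
Hypothesis g_proper : forall y, g y != -oo%E.
Hypothesis gamma_ge0 : 0 <= gamma.
Hypothesis g_sconvex : forall y z (t : R), 0 < t < 1 ->
  (g (t *: y + (1 - t) *: z) <=
   t%:E * g y + (1 - t)%:E * g z - (gamma / 2 * t * (1 - t) * sqn (y - z))%:E)%E.
Hypothesis K_gt0 : (0 < K)%N.
Hypothesis g_x0 : g x0 \is a fin_num.
Hypothesis a0 : a 0%N = 0.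
Hypothesis a1_gt0 : 0 < a 1%N.
Hypothesis a1_le : a 1%N <= (4 * L)^-1.
Hypothesis as_gt0 : forall s, (2 <= s)%N -> 0 < a s.
Hypothesis v10 : v 1%N 0%N = x0.
Hypothesis v_argmin : forall s k,
  ((s == 1%N) && (k <= 1)%N) || ((2 <= s)%N && (k <= K)%N) ->
  forall u, (Psi s k (v s k) <= Psi s k u)%E.

Lemma AseqS n : A n.+1 = A n + a n.+1.
Proof. by rewrite /Aseq big_ord_recr. Qed.

Lemma Aseq1 : A 1 = a 1%N.
Proof. by rewrite AseqS /Aseq big_ord1 a0 add0r. Qed.

Lemma a_ge0 s : 0 <= a s.
Proof.
by case: s => [|[|s]]; [rewrite a0 | exact: ltW | exact: ltW (as_gt0 s.+2 isT)].
Qed.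

Lemma Aseq_gt0 n : 0 < A n.+1.
Proof.
elim: n => [|n IH]; first by rewrite Aseq1.
by rewrite AseqS; have := as_gt0 n.+2 isT; lra.
Qed.

Lemma K_ge0 : 0 <= K%:R :> R.
Proof. exact: ler0n. Qed.

Definition domg : pred vec := fun y => g y \is a fin_num.
Definition greal y : R := fine (g y).
Definition fbar y : R := f y + greal y.

Lemma gE {y} : domg y -> g y = (greal y)%:E.
Proof. by move=> Dy; rewrite /greal fineK. Qed.

Lemma g_pinfty {y} : ~~ domg y -> g y = +oo%E.
Proof.
rewrite /domg fin_numE negb_and !negbK => /orP[/eqP gy|/eqP //].
by move: (g_proper y); rewrite gy.
Qed.

Lemma g_comb {y z} {t : R} : domg y -> domg z -> 0 < t < 1 ->
  domg (t *: y + (1 - t) *: z) /\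
  greal (t *: y + (1 - t) *: z) <=
  t * greal y + (1 - t) * greal z - gamma / 2 * t * (1 - t) * sqn (y - z).
Proof.
move=> Dy Dz t01; have := g_sconvex y z _ t01.
rewrite (gE Dy) (gE Dz) -!EFinM -EFinD /domg /greal.
by case: (g (t *: y + (1 - t) *: z)) (g_proper (t *: y + (1 - t) *: z)).
Qed.

Lemma domg_convex y z (t : R) : domg y -> domg z -> 0 < t < 1 ->
  domg (t *: y + (1 - t) *: z).
Proof. by move=> Dy Dz t01; case: (g_comb Dy Dz t01). Qed.

Lemma greal_sconvex : sconvex_on domg gamma greal.
Proof. by move=> y z t Dy Dz t01; case: (g_comb Dy Dz t01). Qed.

Lemma fbar_convex : sconvex_on domg 0 fbar.
Proof.
have f_sc0 : sconvex_on domg 0 f.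
  move=> y z t _ _ /andP[t0 t1]; rewrite !mul0r subr0.
  by apply: f_convex; apply/andP; split; lra.
apply: sconvex_on_weaken gamma_ge0 _.
by rewrite -[gamma]add0r; exact: (sconvex_onD f_sc0 greal_sconvex).
Qed.

(* The models psi_{s,k} are finite on dom g and +oo outside it; [Phi] is their
   real part. *)
Definition Phi s k u : R := fine (Psi s k u).

Definition phi_init u : R :=
  K%:R / 2 * sqn (u - x0) + K%:R * a 1%N * (f x0 + dotp (gradf x0) (u - x0) + greal u).

Lemma Psi20 u : Psi 2 0 u = Psi 1 1 u.
Proof. by rewrite /psi /stage big_ord0 adde0. Qed.

Lemma Psi20E u : domg u -> Psi 2 0 u = (phi_init u)%:E.
Proof. by move=> Du; rewrite Psi20 /= /psi11 /psi10 (gE Du) -EFinD. Qed.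

Lemma Psi_next n u : Psi n.+3 0 u = Psi n.+2 K u.
Proof. by rewrite /psi /stage big_ord0 adde0. Qed.

Lemma Psi_step n k u : domg u ->
  Psi n.+2 k.+1 u = (Psi n.+2 k u + (a n.+2 * (lmod n.+2 k.+1 u + greal u))%:E)%E.
Proof. by move=> Du; rewrite /psi /stage big_ord_recr /= addeA (gE Du) -EFinD -EFinM. Qed.

Lemma stage_ge0 s k u : ~~ domg u -> (0 <= stage f g a x q s k u)%E.
Proof.
move=> Du; apply: sume_ge0 => i _; apply: mule_ge0; first by rewrite lee_fin a_ge0.
by rewrite (g_pinfty Du) addey.
Qed.

Lemma Psi_pinfty n k u : ~~ domg u -> Psi n.+2 k u = +oo%E.
Proof.
move=> Du; have stage_finite s k' : stage f g a x q s k' u != -oo%E.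
  by case: (stage _ _ _ _ _ _ _ _) (stage_ge0 s k' u Du).
suff psi0_pinfty : psi0 f gradf g K x0 a x q n.+2 u = +oo%E.
  by rewrite /psi psi0_pinfty addye.
elim: n => [|n IH].
  rewrite /= /psi11 (g_pinfty Du) addey // muleC gt0_mulye ?addey //.
  by rewrite lte_fin mulr_gt0 // ltr0n.
have psi0S : psi0 f gradf g K x0 a x q n.+3 u =
    (psi0 f gradf g K x0 a x q n.+2 u + stage f g a x q n.+2 K u)%E by [].
by rewrite psi0S IH addye.
Qed.

Lemma Psi_fin n k u : domg u -> Psi n.+2 k u \is a fin_num.
Proof.
move=> Du; elim: n k => [|n IHn] k; elim: k => [|k IHk].
- by rewrite Psi20E.
- by rewrite Psi_step // fin_numD IHk.
- by rewrite Psi_next IHn.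
- by rewrite Psi_step // fin_numD IHk.
Qed.

Lemma PsiE n k u : domg u -> Psi n.+2 k u = (Phi n.+2 k u)%:E.
Proof. by move=> Du; rewrite /Phi fineK // Psi_fin. Qed.

Lemma Phi20E u : domg u -> Phi 2 0 u = phi_init u.
Proof. by move=> Du; rewrite /Phi Psi20E. Qed.

Lemma Phi_next n : Phi n.+3 0 = Phi n.+2 K.
Proof. by apply/funext => u; rewrite /Phi Psi_next. Qed.

Lemma Phi_step n k u : domg u ->
  Phi n.+2 k.+1 u = Phi n.+2 k u + a n.+2 * (lmod n.+2 k.+1 u + greal u).
Proof. by move=> Du; apply: EFin_inj; rewrite EFinD -!PsiE // Psi_step. Qed.

Lemma Phi_stage_sum n k u : domg u ->
  Phi n.+2 k u = Phi n.+2 0 u + \sum_(i < k) a n.+2 * (lmod n.+2 i.+1 u + greal u).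
Proof.
move=> Du; elim: k => [|k IH]; first by rewrite big_ord0 addr0.
by rewrite Phi_step // IH big_ord_recr addrA.
Qed.

Lemma argmin_dom (F : vec -> \bar R) w : (forall u, (F w <= F u)%E) ->
  (forall u, ~~ domg u -> F u = +oo%E) -> (forall u, domg u -> F u \is a fin_num) ->
  domg w /\ forall u, domg u -> fine (F w) <= fine (F u).
Proof.
move=> wmin Finf Ffin.
have Dw : domg w.
  apply/negPn/negP => nDw; move: (wmin x0); rewrite (Finf _ nDw).
  by case: (F x0) (Ffin _ g_x0).
split=> // u Du; move: (wmin u).
by rewrite -(fineK (Ffin _ Dw)) -(fineK (Ffin _ Du)) lee_fin.
Qed.

Lemma v_min n {k} : (k <= K)%N ->
  domg (v n.+2 k) /\ forall u, domg u -> Phi n.+2 k (v n.+2 k) <= Phi n.+2 k u.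
Proof.
move=> kK; apply: argmin_dom; last 2 first.
- by move=> u; exact: Psi_pinfty.
- by move=> u; exact: Psi_fin.
by apply: v_argmin; rewrite kK orbT.
Qed.

Lemma v11_min :
  domg (v 1 1) /\ forall u, domg u -> Phi 2 0 (v 1 1) <= Phi 2 0 u.
Proof.
apply: argmin_dom; last 2 first.
- by move=> u; exact: Psi_pinfty.
- by move=> u; exact: Psi_fin.
by move=> u; rewrite !Psi20; exact: v_argmin.
Qed.

Lemma min_value_unique {F : vec -> R} {w1 w2} : domg w1 -> domg w2 ->
  (forall u, domg u -> F w1 <= F u) -> (forall u, domg u -> F w2 <= F u) ->
  F w1 = F w2.
Proof. by move=> D1 D2 min1 min2; apply/le_anti; rewrite min1 // min2. Qed.

Lemma stage_term_sconvex s k :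
  sconvex_on domg (a s * gamma) (fun u => a s * (lmod s k u + greal u)).
Proof.
have := sconvex_onZ (a_ge0 s)
  (sconvex_onD (sconvex_on_affine (D := domg) (f (x s k)) (q s k) (x s k)) greal_sconvex).
by rewrite add0r.
Qed.

Lemma Phi_init_sconvex : sconvex_on domg (K%:R * (1 + A 1 * gamma)) (Phi 2 0).
Proof.
apply: (sconvex_on_eq domg_convex (F' := phi_init)); first by move=> u; exact: Phi20E.
have Ka1_ge0 : 0 <= K%:R * a 1%N by rewrite mulr_ge0 ?K_ge0 ?a_ge0.
have := sconvex_onD (sconvex_on_sqn (D := domg) K%:R x0) (sconvex_onZ Ka1_ge0
  (sconvex_onD (sconvex_on_affine (D := domg) (f x0) (gradf x0) x0) greal_sconvex)).
by rewrite Aseq1 add0r mulrDr mulr1 mulrA.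
Qed.

Lemma Phi_sconvex_stage n m k : sconvex_on domg m (Phi n.+2 0) ->
  sconvex_on domg (m + (a n.+2 * gamma) *+ k) (Phi n.+2 k).
Proof.
move=> Phi0_sc; apply: (sconvex_on_eq domg_convex (Phi_stage_sum n k)).
have := sconvex_onD Phi0_sc
  (sconvex_on_sum k (m := fun=> a n.+2 * gamma)
     (F := fun i u => a n.+2 * (lmod n.+2 i.+1 u + greal u))
     (fun i => stage_term_sconvex n.+2 i.+1)).
by rewrite sumr_const card_ord.
Qed.

Lemma Phi_sconvex0 n : sconvex_on domg (K%:R * (1 + A n.+1 * gamma)) (Phi n.+2 0).
Proof.
elim: n => [|n IH]; first exact: Phi_init_sconvex.
rewrite Phi_next; have := Phi_sconvex_stage n _ K IH.
suff -> : K%:R * (1 + A n.+1 * gamma) + (a n.+2 * gamma) *+ K =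
  K%:R * (1 + A n.+2 * gamma) by [].
by rewrite (AseqS n.+1) -mulr_natl; ring.
Qed.

Lemma Phi_sconvex n k : sconvex_on domg (K%:R * (1 + A n.+1 * gamma)) (Phi n.+2 k).
Proof.
apply: sconvex_on_weaken (Phi_sconvex_stage n _ k (Phi_sconvex0 n)).
by rewrite lerDl mulrn_wge0 // mulr_ge0 ?a_ge0.
Qed.

Definition Eopt s k : R :=
  A s * (f (yl s k) - f (x s k)) - A s.-1 * (f (ytl s.-1) - f (x s k))
  + a s * dotp (q s k) (x s k - v s k)
  - K%:R * (1 + A s.-1 * gamma) / 2 * sqn (v s k - v s k.-1).

Definition gerr s k u : R := a s * dotp (gradf (x s k) - q s k) (x s k - u).

Lemma Err_split s k u : Err f gradf K a x q v gamma s k u = Eopt s k + gerr s k u.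
Proof. by rewrite /Err /Eopt /gerr; ring. Qed.

(* Guaranteed increase of the minimal model value from v_{s,i} to v_{s,i+1},
   s = n+2, together with the new linear-model term. *)
Definition progress n i : R :=
  K%:R * (1 + A n.+1 * gamma) / 2 * sqn (v n.+2 i.+1 - v n.+2 i)
  + a n.+2 * (lmod n.+2 i.+1 (v n.+2 i.+1) + greal (v n.+2 i.+1)).

(* Summing the quadratic growth of each model at its minimizer over stage n+2. *)
Lemma stage_telescope n k : (k <= K)%N ->
  Phi n.+2 0 (v n.+2 0) + \sum_(i < k) progress n i <= Phi n.+2 k (v n.+2 k).
Proof.
elim: k => [|k IH] kK; first by rewrite big_ord0 addr0.
have [Dk mink] := v_min n (ltnW kK).
have [Dk1 _] := v_min n kK.
have growth := sconvex_min_growth domg_convex (Phi_sconvex n k) Dk mink Dk1.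
rewrite big_ord_recr /= Phi_step //.
move: (IH (ltnW kK)) growth; rewrite /progress.
set S := \sum_(i < k) _; set T1 := K%:R * _ / 2 * sqn _; set T2 := a n.+2 * _.
lra.
Qed.

(* One inner step: by convexity of g along y_{s,k} = (A_{s-1} ytilde_{s-1} + a_s v_{s,k})/A_s,
   the objective at y_{s,k} is controlled by the progress of that step. *)
Lemma step_bound {n} i : domg (ytl n.+1) -> domg (v n.+2 i.+1) ->
  domg (yl n.+2 i.+1) /\
  A n.+2 * fbar (yl n.+2 i.+1) - Eopt n.+2 i.+1 <= A n.+1 * fbar (ytl n.+1) + progress n i.
Proof.
move=> Dy Dv.
have greal_convex : sconvex_on domg 0 greal := sconvex_on_weaken gamma_ge0 greal_sconvex.
have [Dyl hyl] := convex_on_comb domg_convex greal_convex (Aseq_gt0 n) (as_gt0 n.+2 isT) Dy Dv.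
have yl_def : yl n.+2 i.+1 = (A n.+1 / (A n.+1 + a n.+2)) *: ytl n.+1 +
    (a n.+2 / (A n.+1 + a n.+2)) *: v n.+2 i.+1 by rewrite /yy -AseqS.
rewrite -yl_def in Dyl hyl; split => //.
rewrite /Eopt /progress /fbar /lin -[n.+2.-1]/n.+1 -[i.+1.-1]/i.
rewrite (dotp_subC (q _ _) (v _ _)) (AseqS n.+1).
lra.
Qed.

(* One full stage: combining the K inner steps with Jensen's inequality for
   ytilde_{n+2} = (1/K) sum_k y_{n+2,k}. *)
Lemma stage_bound {n} {C : R} : domg (ytl n.+1) ->
  K%:R * A n.+1 * fbar (ytl n.+1) + C <= Phi n.+2 0 (v n.+2 0) ->
  domg (ytl n.+2) /\
  K%:R * A n.+2 * fbar (ytl n.+2) + C - \sum_(1 <= k < K.+1) Eopt n.+2 k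
  <= Phi n.+2 K (v n.+2 K).
Proof.
move=> Dy hstart.
have Dv i : (i < K)%N -> domg (v n.+2 i.+1) by move=> iK; case: (v_min n iK).
have Dyl i : (i <= K.-1)%N -> domg (yl n.+2 i.+1).
  by rewrite -ltnS (prednK K_gt0) => iK; case: (step_bound i Dy (Dv i iK)).
have := jensen_on domg_convex (p := fun i => yl n.+2 i.+1) fbar_convex Dyl.
rewrite (prednK K_gt0) => -[Dytl hjensen].
split; first exact: Dytl.
have hsteps : A n.+2 * \sum_(i < K) fbar (yl n.+2 i.+1) - \sum_(i < K) Eopt n.+2 i.+1
    <= K%:R * A n.+1 * fbar (ytl n.+1) + \sum_(i < K) progress n i.
  have -> : K%:R * A n.+1 * fbar (ytl n.+1) = \sum_(i < K) A n.+1 * fbar (ytl n.+1).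
    by rewrite sumr_const card_ord mulr_natl mulrnAl.
  rewrite mulr_sumr -sumrB -big_split; apply: ler_sum => i _.
  by case: (step_bound i Dy (Dv i (ltn_ord i))).
have hyt : K%:R * A n.+2 * fbar (ytl n.+2) <= A n.+2 * \sum_(i < K) fbar (yl n.+2 i.+1).
  by rewrite [K%:R * _]mulrC -mulrA ler_wpM2l ?(ltW (Aseq_gt0 n.+1)) //; exact: hjensen.
have -> : \sum_(1 <= k < K.+1) Eopt n.+2 k = \sum_(i < K) Eopt n.+2 i.+1.
  by rewrite big_add1 big_mkord.
move: (stage_telescope n K (leqnn K)) hsteps hyt hstart.
(* identify the sums up to conversion, so that lra sees them as the same atoms *)
set SP := \sum_(i < K) progress n i; set SE := \sum_(i < K) Eopt n.+2 i.+1.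
set SF := \sum_(i < K) fbar (yl n.+2 i.+1); lra.
Qed.

(* Stage 1: v_{1,1} is a proximal gradient step with a_1 <= 1/(4L). *)
Lemma initial_bound : domg (v 1 1) /\
  K%:R * A 1 * fbar (v 1 1) + K%:R / 4 * sqn (v 1 1 - v 1 0) <= Phi 2 0 (v 1 1).
Proof.
have [D11 _] := v11_min; split => //.
rewrite Phi20E // /phi_init Aseq1 v10 /fbar.
have Ka1_ge0 : 0 <= K%:R * a 1%N by rewrite mulr_ge0 ?K_ge0 ?a_ge0.
have KS_ge0 : 0 <= K%:R * sqn (v 1 1 - x0) by rewrite mulr_ge0 ?K_ge0 ?sqn_ge0.
have L4_gt0 : 0 < 4 * L by rewrite mulr_gt0.
have a1L : a 1%N * (4 * L) <= 1 by rewrite -ler_pdivlMr // div1r.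
have := ler_wpM2l Ka1_ge0 (f_smooth x0 (v 1 1)).
have := ler_wpM2l KS_ge0 a1L.
by move: KS_ge0; lra.
Qed.

Lemma value_bound n : domg (ytl n.+2) /\
  K%:R * A n.+2 * fbar (ytl n.+2) + K%:R / 4 * sqn (v 1 1 - v 1 0)
  - \sum_(2 <= s < n.+3) \sum_(1 <= k < K.+1) Eopt s k <= Phi n.+2 K (v n.+2 K).
Proof.
elim: n => [|n [Dy IH]].
  have [D11 hinit] := initial_bound.
  have [D20 min20] := v_min 0 (leq0n K).
  have [_ min11] := v11_min.
  rewrite -(min_value_unique D20 D11 min20 min11) in hinit.
  by have [] := stage_bound (n := 0) D11 hinit; rewrite big_nat1.
have [D30 min30] := v_min n.+1 (leq0n K).
have [DK minK] := v_min n (leqnn K).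
rewrite -Phi_next in minK.
have hstart := IH; rewrite -Phi_next -(min_value_unique D30 DK min30 minK) in hstart.
have [Dy' hend] := stage_bound (C := K%:R / 4 * sqn (v 1 1 - v 1 0)
   - \sum_(2 <= s < n.+3) \sum_(1 <= k < K.+1) Eopt s k) Dy ltac:(lra).
by split => //; rewrite big_nat_recr //=; move: hend; lra.
Qed.

Lemma lin_le s k u :
  lmod s k u <= f u + dotp (gradf (x s k) - q s k) (x s k - u).
Proof.
have := convex_tangent_le f_convex f_smooth (x s k) u.
rewrite /lin dotpDl dotpNl (dotp_subC (gradf _) u) (dotp_subC (q _ _) u); lra.
Qed.

Lemma Phi_upper n u : domg u ->
  Phi n.+2 0 u <= K%:R / 2 * sqn (u - x0) + K%:R * A n.+1 * fbar u
  + \sum_(2 <= s < n.+2) \sum_(1 <= k < K.+1) gerr s k u.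
Proof.
move=> Du; elim: n => [|n IH].
  rewrite Phi20E // big_geq // addr0 Aseq1 /phi_init /fbar.
  have Ka1_ge0 : 0 <= K%:R * a 1%N by rewrite mulr_ge0 ?K_ge0 ?a_ge0.
  have : K%:R * a 1%N * (f x0 + dotp (gradf x0) (u - x0) + greal u) <=
      K%:R * a 1%N * (f u + greal u).
    by rewrite ler_wpM2l // lerD2r (convex_tangent_le f_convex f_smooth).
  lra.
rewrite Phi_next Phi_stage_sum //.
have -> : \sum_(2 <= s < n.+3) \sum_(1 <= k < K.+1) gerr s k u =
    \sum_(2 <= s < n.+2) \sum_(1 <= k < K.+1) gerr s k u + \sum_(i < K) gerr n.+2 i.+1 u.
  by rewrite big_nat_recr //=; congr (_ + _); rewrite big_add1 big_mkord.
have hstage : \sum_(i < K) a n.+2 * (lmod n.+2 i.+1 u + greal u) <=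
    K%:R * a n.+2 * fbar u + \sum_(i < K) gerr n.+2 i.+1 u.
  have -> : K%:R * a n.+2 * fbar u = \sum_(i < K) a n.+2 * fbar u.
    by rewrite sumr_const card_ord mulr_natl mulrnAl.
  rewrite -big_split; apply: ler_sum => i _.
  rewrite /= /gerr /fbar -!mulrDr ler_wpM2l ?a_ge0 //.
  by have := lin_le n.+2 i.+1 u; lra.
rewrite (AseqS n.+1); move: IH hstage.
set SL := \sum_(i < K) _ * (_ + greal u); set SG := \sum_(i < K) gerr n.+2 i.+1 u.
set SS := \sum_(2 <= s < n.+2) _; lra.
Qed.

(* The bound of the lemma for S = n+2: for u outside dom g the left-hand side
   is -oo; otherwise combine the invariant [value_bound], the quadratic growth
   of psi_{S,K} = psi_{S+1,0} at its minimizer v_{S,K}, and [Phi_upper]. *)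
Lemma accelerated_bound n u :
  ((K%:R * A n.+2)%:E *
     ((f (ytl n.+2))%:E + g (ytl n.+2) - ((f u)%:E + g u))
   <= (K%:R / 2 * sqn (x0 - u)
       - K%:R * (1 + A n.+2 * gamma) / 2 * sqn (v n.+2 K - u)
       - K%:R / 4 * sqn (v 1 1 - v 1 0)
       + \sum_(2 <= s < n.+3) \sum_(1 <= k < K.+1)
            Err f gradf K a x q v gamma s k u)%:E)%E.
Proof.
have [Dy hval] := value_bound n.
have KA_gt0 : 0 < K%:R * A n.+2 by rewrite mulr_gt0 ?ltr0n ?Aseq_gt0.
have [Du|nDu] := boolP (domg u); last first.
  rewrite (g_pinfty nDu) addey // (gE Dy) -EFinD addeNy muleC gt0_mulNye ?lte_fin //.
  exact: leNye.
rewrite (gE Dy) (gE Du) -!EFinD -EFinM lee_fin.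
have [DK minK] := v_min n (leqnn K); rewrite -Phi_next in minK.
have growth := sconvex_min_growth domg_convex (Phi_sconvex0 n.+1) DK minK Du.
have upper := Phi_upper n.+1 u Du.
rewrite -Phi_next in hval.
have -> : \sum_(2 <= s < n.+3) \sum_(1 <= k < K.+1) Err f gradf K a x q v gamma s k u =
    \sum_(2 <= s < n.+3) \sum_(1 <= k < K.+1) Eopt s k
  + \sum_(2 <= s < n.+3) \sum_(1 <= k < K.+1) gerr s k u.
  rewrite -big_split; apply: eq_bigr => s _.
  by rewrite -big_split; apply: eq_bigr => k _; exact: Err_split.
rewrite (sqn_subC x0 u) (sqn_subC (v _ _) u) /fbar.
move: hval growth upper; rewrite /fbar.
set SE := \sum_(2 <= s < n.+3) _; set SG := \sum_(2 <= s < n.+3) _; lra.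
Qed.

End AcceleratedBound.

Theorem lemma5 (R : realType) (d : nat)
  (f : 'rV[R]_d -> R) (gradf : 'rV[R]_d -> 'rV[R]_d) (g : 'rV[R]_d -> \bar R)
  (L gamma : R) (K : nat) (x0 : 'rV[R]_d) (a : nat -> R)
  (x q v : nat -> nat -> 'rV[R]_d) :
  (* f convex *)
  (forall (y z : 'rV[R]_d) (t : R), 0 <= t <= 1 ->
     f (t *: y + (1 - t) *: z) <= t * f y + (1 - t) * f z) ->
  (* f continuously differentiable with gradient gradf *)
  (forall y : 'rV[R]_d, differentiable f y) ->
  (forall y h : 'rV[R]_d, 'd f y h = dotp (gradf y) h) ->
  continuous gradf ->
  (* L-smoothness upper bound *)
  0 < L ->
  (forall y z : 'rV[R]_d,
     f z <= f y + dotp (gradf y) (z - y) + L / 2 * sqn (z - y)) ->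
  (* g proper, lower semicontinuous, gamma-strongly convex *)
  (forall y, g y != -oo%E) ->
  lower_semicontinuous g ->
  0 <= gamma ->
  (forall (y z : 'rV[R]_d) (t : R), 0 < t < 1 ->
     (g (t *: y + (1 - t) *: z)%R <=
      t%:E * g y + (1 - t)%R%:E * g z
      - (gamma / 2 * t * (1 - t) * sqn (y - z))%R%:E)%E) ->
  (* K >= 1, x0 in dom g *)
  (0 < K)%N ->
  g x0 \is a fin_num ->
  (* step sizes *)
  a 0%N = 0 -> 0 < a 1%N -> a 1%N <= (4 * L)^-1 ->
  (forall s, (2 <= s)%N -> 0 < a s) ->
  (* v_{1,0} = x_0 and v_{s,k} = argmin psi_{s,k} *)
  v 1%N 0%N = x0 ->
  (forall s k, ((s == 1%N) && (k <= 1)%N) || ((2 <= s)%N && (k <= K)%N) ->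
     forall u, (psi f gradf g K x0 a x q s k (v s k)
                <= psi f gradf g K x0 a x q s k u)%E) ->
  forall (u : 'rV[R]_d) (S : nat), (2 <= S)%N ->
  ((K%:R * Aseq a S)%R%:E *
     ((f (ytilde K a v S))%:E + g (ytilde K a v S) - ((f u)%:E + g u))
   <= (K%:R / 2 * sqn (x0 - u)
       - K%:R * (1 + Aseq a S * gamma) / 2 * sqn (v S K - u)
       - K%:R / 4 * sqn (v 1%N 1%N - v 1%N 0%N)
       + \sum_(2 <= s < S.+1) \sum_(1 <= k < K.+1)
            Err f gradf K a x q v gamma s k u)%R%:E)%E.
Proof.
move=> f_convex _ _ _ L_gt0 f_smooth g_proper _ gamma_ge0 g_sconvex K_gt0 g_x0
  a0 a1_gt0 a1_le as_gt0 v10 v_argmin u [|[|n]] // _.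
exact: (@accelerated_bound R d f gradf g L gamma K x0 a x q v f_convex L_gt0 f_smooth g_proper gamma_ge0 g_sconvex
  K_gt0 g_x0 a0 a1_gt0 a1_le as_gt0 v10 v_argmin).
Qed.
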